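(* Let $\Sigma\cup\{\sigma\}$ be a finite set of marginal identity atoms, each of the form $x_1\ldots x_n\approx y_1\ldots y_n$ where $x_1,\dots,x_n$ are pairwise distinct variables and $y_1,\dots,y_n$ are pairwise distinct variables. Then $\Sigma\models\sigma$ if and only if $\Sigma\vdash\sigma$, where $\vdash$ is derivability using the following rules: (1) reflexivity: $x_1\ldots x_n\approx x_1\ldots x_n$; (2) symmetry: from $x_1\ldots x_n\approx y_1\ldots y_n$ infer $y_1\ldots y_n\approx x_1\ldots x_n$; (3) projection and permutation: from $x_1\ldots x_n\approx y_1\ldots y_n$ infer $x_{i_1}\ldots x_{i_k}\approx y_{i_1}\ldots y_{i_k}$ for any sequence $i_1,\dots,i_k$ of distinct integers from $\{1,\dots,n\}$; (4) transitivity: from $x_1\ldots x_n\approx y_1\ldots y_n$ and $y_1\ldots y_n\approx z_1\ldots z_n$ infer $x_1\ldots x_n\approx z_1\ldots z_n$.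
   Context: A probabilistic team is a function $\mathbb X\colon X\to[0,1]$ with $\sum_{s\in X}\mathbb X(s)=1$, where $X$ is a finite set of assignments from a finite set of variables into some set of values. For a tuple of variables $\vec x$ and tuple of values $\vec a$, $|\mathbb X_{\vec x=\vec a}|$ is the total weight $\sum\{\mathbb X(s): s(\vec x)=\vec a\}$. A probabilistic team $\mathbb X$ (whose variable domain contains all variables involved) satisfies $\vec x\approx\vec y$ ($\vec x,\vec y$ of equal length) if $|\mathbb X_{\vec x=\vec a}|=|\mathbb X_{\vec y=\vec a}|$ for every tuple of values $\vec a$. $\Sigma\models\sigma$ means every probabilistic team satisfying all atoms of $\Sigma$ also satisfies $\sigma$. A proof of $\sigma$ from $\Sigma$ is a finite sequence of marginal identity atoms ending in $\sigma$, each of which is in $\Sigma$ or follows from earlier ones by one of the rules; $\Sigma\vdash\sigma$ means such a proof exists. *)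

From HB Require Import structures.
From mathcomp Require Import all_boot all_order all_algebra.
From mathcomp Require Import Rstruct.
From Stdlib Require Rdefinitions.
Set Implicit Arguments. Unset Strict Implicit. Unset Printing Implicit Defensive.
Import Order.TTheory GRing.Theory Num.Theory.
Local Open Scope ring_scope.

Definition var := nat.

Definition atom := (seq var * seq var)%type.

Definition wf_atom (a : atom) : bool :=
  [&& uniq a.1, uniq a.2 & size a.1 == size a.2].

Definition atom_vars (a : atom) : seq var := a.1 ++ a.2.

(* A probabilistic team over values V: a finite set X of assignments
   (indexed by the finite type I, assignment of row i is [row i], meaningful
   on the finite variable domain [dom]); distinct rows are distinct
   assignments on dom; weights in [0,1] summing to 1. *)
Record pteam (V : eqType) := PTeam {
  dom : seq var;
  idx : finType;
  row : idx -> var -> V;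
  wt : idx -> Rdefinitions.R;
  wt_range : forall i, 0 <= wt i <= 1;
  wt_sum : \sum_(i : idx) wt i = 1;
  row_inj : forall i j, (forall x, x \in dom -> row i x = row j x) -> i = j
}.

Definition marg (V : eqType) (T : pteam V) (x : seq var) (a : seq V) : Rdefinitions.R :=
  \sum_(i : idx T | [seq row i v | v <- x] == a) wt i.

Definition sat (V : eqType) (T : pteam V) (a : atom) : Prop :=
  {subset atom_vars a <= dom T} /\
  forall t : seq V, marg T a.1 t = marg T a.2 t.

Definition models (Sigma : seq atom) (sigma : atom) : Prop :=
  forall (V : eqType) (T : pteam V),
    {subset flatten [seq atom_vars a | a <- sigma :: Sigma] <= dom T} ->
    (forall a, a \in Sigma -> sat T a) -> sat T sigma.

Inductive derivable (Sigma : seq atom) : atom -> Prop :=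
| d_ax : forall a, a \in Sigma -> derivable Sigma a
| d_refl : forall x : seq var, derivable Sigma (x, x)
| d_sym : forall x y, derivable Sigma (x, y) -> derivable Sigma (y, x)
| d_proj : forall (x y : seq var) (ix : seq nat),
    size x = size y -> uniq ix -> all (fun i : nat => (i < size x)%N) ix ->
    derivable Sigma (x, y) ->
    derivable Sigma ([seq nth 0%N x i | i <- ix], [seq nth 0%N y i | i <- ix])
| d_trans : forall x y z,
    derivable Sigma (x, y) -> derivable Sigma (y, z) -> derivable Sigma (x, z).

(* Soundness is a direct induction on derivations; the only nontrivial rule is
   projection/permutation, handled by grouping rows by the value of the full
   tuple (sum_proj_marg).

   Completeness: assume Σ ⊬ x ≈ y, with n = |x| and D the variables of the
   problem.  The counter team has as rows the pairs (z, b) of an injective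
   n-tuple z of variables of D and a bit vector b : 'I_n -> bool, subject to
   "Σ ⊢ x ≈ z  iff  b has even parity"; the row (z, b) assigns (i, b_i) to the
   variable z_i and None to the other variables; all rows have equal weight.
   For a derivable atom u ≈ v, a permutation π of D sending u pointwise to v
   transports rows with u-value t to rows with v-value t (transport_rows),
   flipping one bit outside u when the derivability class of z changes; since
   a z inside u keeps its class (cls_inside), this is an injection, so the team
   satisfies every atom of Σ.  The value ((i, false))_i is taken by x at the
   row (x, 0) but by y at no row, as that would force Σ ⊢ x ≈ y. *)
From HB Require Import structures.
From mathcomp Require Import all_boot all_order all_algebra all_fingroup.
From mathcomp Require Import Rstruct boolp.
From Stdlib Require Rdefinitions.
Set Implicit Arguments. Unset Strict Implicit. Unset Printing Implicit Defensive.
Import Order.TTheory GRing.Theory Num.Theory.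

Section Soundness.
Local Open Scope ring_scope.
Variables (V : eqType) (T : pteam V).

Lemma sum_proj_marg (z : seq var) (S : seq (seq V)) (G : pred (seq V)) :
  uniq S -> (forall i : idx T, [seq row i v | v <- z] \in S) ->
  \sum_(i : idx T | G [seq row i v | v <- z]) wt i =
  \sum_(s <- S | G s) marg T z s.
Proof.
move=> uS zS; rewrite /marg.
under [RHS]eq_bigr do rewrite big_mkcond.
rewrite big_mkcond exchange_big /=; apply: eq_bigr => i _.
rewrite (big_rem [seq row i v | v <- z]) ?zS //= eqxx big1_seq ?addr0 //.
move=> s /andP[_]; rewrite mem_rem_uniq // inE => /andP[ns _].
by rewrite eq_sym (negbTE ns).
Qed.

Lemma marg_eq_sum_pred (x y : seq var) (G : pred (seq V)) :
  (forall s, marg T x s = marg T y s) ->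
  \sum_(i : idx T | G [seq row i v | v <- x]) wt i =
  \sum_(i : idx T | G [seq row i v | v <- y]) wt i.
Proof.
move=> xy.
pose values z := [seq [seq row i v | v <- z] | i <- enum (idx T)].
rewrite (@sum_proj_marg x (undup (values x ++ values y))) ?undup_uniq //; last first.
  by move=> i; rewrite mem_undup mem_cat (map_f (fun i => [seq row i v | v <- x])) ?mem_enum.
rewrite (@sum_proj_marg y (undup (values x ++ values y))) ?undup_uniq //; last first.
  by move=> i; rewrite mem_undup mem_cat (map_f (fun i => [seq row i v | v <- y])) ?mem_enum ?orbT.
by apply: eq_bigr => s _; rewrite xy.
Qed.

Lemma derivable_marg_eq (Sigma : seq atom) (a : atom) : derivable Sigma a ->
  (forall b, b \in Sigma -> forall t, marg T b.1 t = marg T b.2 t) ->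
  forall t, marg T a.1 t = marg T a.2 t.
Proof.
move=> der margS; elim: der => [b /margS //|//|x y _ IH t|x y ix sxy _ ix_lt _ IH t|].
- by rewrite IH.
- (* The projected value is a function G of the full value; a row i0 supplies
     the default entry needed to define G (a team without rows is trivial). *)
  have [i0 _|empty] := pickP (idx T); last first.
    by rewrite /marg !big_pred0 // => i; have := empty i.
  pose G (s : seq V) := [seq nth (row i0 0%N) s j | j <- ix] == t.
  have proj_G z : size z = size x -> forall i : idx T,
      ([seq row i v | v <- [seq nth 0%N z j | j <- ix]] == t)
      = G [seq row i v | v <- z].
    move=> sz i; rewrite /G -map_comp; congr (_ == _); apply/eq_in_map => j jix /=.
    have jz : (j < size z)%N by rewrite sz (allP ix_lt).
    by rewrite (nth_map 0%N) // (set_nth_default (row i0 0%N)) ?size_map.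
  rewrite /marg (eq_bigl _ _ (proj_G x erefl)) (eq_bigl _ _ (proj_G y (esym sxy))).
  exact: marg_eq_sum_pred.
- by move=> x y z _ IH1 _ IH2 t; rewrite IH1 IH2.
Qed.

End Soundness.

Lemma soundness (Sigma : seq atom) (sigma : atom) :
  derivable Sigma sigma -> models Sigma sigma.
Proof.
move=> der V T domT satS; split.
  by move=> v vsigma; apply: domT; rewrite /= mem_cat vsigma.
by apply: (derivable_marg_eq der) => b /satS [].
Qed.

Lemma perm_extending (T : finType) (s t : seq T) :
  uniq s -> uniq t -> size s = size t -> exists pi : {perm T}, map pi s = t.
Proof.
elim: s t => [|a s IH] [|b t] //=; first by exists 1%g.
move=> /andP[a_s us] /andP[b_t ut] [sst].
have [pi pi_st] := IH t us ut sst.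
exists (pi * tperm (pi a) b)%g; rewrite permM tpermL; congr (_ :: _).
rewrite -pi_st; apply/eq_in_map => w ws /=; rewrite permM tpermD //.
- by apply: contra a_s => /eqP/perm_inj ->.
- by apply: contra b_t => /eqP ->; rewrite -pi_st map_f.
Qed.

Lemma perm_sending (D u v : seq var) :
  uniq u -> uniq v -> size u = size v -> {subset u <= D} -> {subset v <= D} ->
  exists pi : {perm seq_sub D}, forall w j, (j < size u)%N ->
    (val (pi w) == nth 0%N v j) = (val w == nth 0%N u j).
Proof.
move=> uu uv suv uD vD.
have lift s : {subset s <= D} -> map val (pmap insub s : seq (seq_sub D)) = s.
  move=> sD; rewrite (pmap_filter (@insubK _ _ _)).
  by apply/all_filterP/allP => w /sD; rewrite isSome_insub.
have size_lift s : {subset s <= D} -> size (pmap insub s : seq (seq_sub D)) = size s.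
  by move=> sD; rewrite -[in RHS](lift s sD) size_map.
have size_uv : size (pmap insub u : seq (seq_sub D)) = size (pmap insub v : seq (seq_sub D)).
  by rewrite !size_lift.
have [pi pi_uv] :=
  perm_extending (pmap_sub_uniq (seq_sub D) uu) (pmap_sub_uniq (seq_sub D) uv) size_uv.
exists pi => w j ju.
have ju' : (j < size (pmap insub u : seq (seq_sub D)))%N by rewrite size_lift.
rewrite -[in RHS](lift u uD) -[in LHS](lift v vD) !(nth_map w) -?pi_uv ?size_map //.
by rewrite (nth_map w) // !(inj_eq val_inj) (inj_eq perm_inj).
Qed.

Section CounterTeam.
Variables (Sigma : seq atom) (x D : seq var) (n : nat).

Local Notation vtuple := {ffun 'I_n -> seq_sub D}.
Local Notation bits := {ffun 'I_n -> bool}.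

Definition vars (z : vtuple) : seq var := [seq val (z i) | i <- enum 'I_n].
Definition parity (b : bits) : bool := \big[addb/false]_(i < n) b i.
Definition flip (b : bits) (i0 : 'I_n) : bits :=
  [ffun i => if i == i0 then ~~ b i else b i].

Definition cls (z : vtuple) : bool := `[< derivable Sigma (x, vars z) >].

Definition valid_row (p : vtuple * bits) : bool :=
  injectiveb p.1 && (cls p.1 == ~~ parity p.2).
Definition row_index : finType := {p : vtuple * bits | valid_row p}.

Definition row_value (p : row_index) (d : var) : option ('I_n * bool) :=
  omap (fun i => (i, (val p).2 i)) [pick i | val ((val p).1 i) == d].

Lemma parity_flip (b : bits) (i0 : 'I_n) : parity (flip b i0) = ~~ parity b.
Proof.
rewrite /parity (bigD1 i0) //= [in RHS](bigD1 i0) //= ffunE eqxx addNb.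
by congr (~~ (_ (+) _)); apply: eq_bigr => i ni0; rewrite ffunE (negbTE ni0).
Qed.

Lemma vars_uniq (z : vtuple) : injective z -> uniq (vars z).
Proof.
by move=> zinj; rewrite map_inj_uniq ?enum_uniq // => i j /val_inj /zinj.
Qed.

Lemma row_injective (p : row_index) : injective (val p).1.
Proof. by apply/injectiveP; case/andP: (valP p). Qed.

Lemma row_value_at (p : row_index) (i : 'I_n) :
  row_value p (val ((val p).1 i)) = Some (i, (val p).2 i).
Proof.
rewrite /row_value; case: pickP => [j /eqP/val_inj/row_injective -> //|].
by move/(_ i); rewrite eqxx.
Qed.

Lemma row_value_Some (p : row_index) d i b :
  row_value p d = Some (i, b) -> val ((val p).1 i) = d /\ (val p).2 i = b.
Proof. by rewrite /row_value; case: pickP => [j /eqP dj [<- <-]|]. Qed.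

Lemma row_value_inj (p q : row_index) :
  (forall d, d \in D -> row_value p d = row_value q d) -> p = q.
Proof.
move=> pq.
have same i : (val q).1 i = (val p).1 i /\ (val q).2 i = (val p).2 i.
  have := pq _ (ssvalP ((val p).1 i)).
  by rewrite row_value_at => /esym/row_value_Some [/val_inj].
case: p q pq same => [[z1 b1] ?] [[z2 b2] ?] _ /= same.
by apply: val_inj; congr (_, _); apply/ffunP => i; case: (same i).
Qed.

Section Transport.
Variables (u v : seq var) (pi : {perm seq_sub D}).
Hypotheses (suv : size u = size v) (der_uv : derivable Sigma (u, v)).
Hypothesis pi_uv : forall w j, (j < size u)%N ->
  (val (pi w) == nth 0%N v j) = (val w == nth 0%N u j).

(* Apply π to z; if this changes the class, restore validity by flipping a
   bit at a position where z leaves u. *)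
Definition transport_raw (p : vtuple * bits) : vtuple * bits :=
  let z' := [ffun i => pi (p.1 i)] in
  (z', if cls p.1 == cls z' then p.2
       else if [pick i | val (p.1 i) \notin u] is Some i0 then flip p.2 i0
       else p.2).

Lemma pi_in_u w : val w \in u -> val (pi w) = nth 0%N v (index (val w) u).
Proof. by move=> wu; apply/eqP; rewrite pi_uv ?index_mem // nth_index. Qed.

(* A tuple inside u keeps its class under π: by projection of u ≈ v,
   Σ ⊢ z ≈ π z. *)
Lemma cls_inside (z : vtuple) : injective z -> (forall i, val (z i) \in u) ->
  cls z = cls [ffun i => pi (z i)].
Proof.
move=> zinj zu.
have vars_u w : w \in vars z -> w \in u by case/mapP => i _ ->.
pose ix := [seq index w u | w <- vars z].
have der_z : derivable Sigma (vars z, vars [ffun i => pi (z i)]).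
  have -> : vars z = [seq nth 0%N u j | j <- ix].
    rewrite -map_comp -[LHS]map_id; apply/esym/eq_in_map => w /vars_u /= wu.
    by rewrite nth_index.
  have -> : vars [ffun i => pi (z i)] = [seq nth 0%N v j | j <- ix].
    by rewrite /vars -!map_comp; apply: eq_map => i /=; rewrite ffunE pi_in_u.
  apply: d_proj => //.
    rewrite map_inj_in_uniq ?vars_uniq // => a b /vars_u au /vars_u bu ab.
    by rewrite -(nth_index 0%N au) ab nth_index.
  by apply/allP => j /mapP [w /vars_u wu ->]; rewrite index_mem.
apply/asboolP/asboolP => der_x; first exact: d_trans der_x der_z.
exact: d_trans der_x (d_sym der_z).
Qed.

(* Transport preserves validity: the parity is flipped exactly when the
   class changes, and then some position leaves u by cls_inside. *)
Lemma transport_valid (p : vtuple * bits) :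
  valid_row p -> valid_row (transport_raw p).
Proof.
case/andP=> /injectiveP zinj /eqP cls_p; apply/andP; split.
  by apply/injectiveP => i j; rewrite !ffunE => /perm_inj /zinj.
rewrite /=; case: ifP => [/eqP <-|/eqP changed]; first by rewrite cls_p.
case: pickP => [i0 _|inside] /=.
  rewrite parity_flip -cls_p; apply/eqP.
  by move: changed; case: (cls p.1); case: (cls _).
by case: changed; apply: cls_inside zinj _ => i; have /negbFE := inside i.
Qed.

Definition transport (p : row_index) : row_index :=
  Sub (transport_raw (val p)) (transport_valid (valP p)).

Lemma transport_inj : injective transport.
Proof.
move=> [[z1 b1] ?] [[z2 b2] ?] /(congr1 val); rewrite !SubK /= => -[z12 b12].
have ez : z1 = z2.
  by apply/ffunP => i; have := congr1 (fun z : vtuple => z i) z12; rewrite !ffunE => /perm_inj.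
subst z2; apply: val_inj; congr (_, _); move: b12.
case: ifP => _ //; case: pickP => [i0 _|_] //= b12.
apply/ffunP => i; have := congr1 (fun b : bits => b i) b12; rewrite !ffunE.
by case: (i == i0) => // /negbLR; rewrite negbK.
Qed.

(* The v-value of the transported row is the u-value of the row: positions
   inside u move to the matching positions of v with their bits, and the only
   bit that may be flipped sits at a position outside u. *)
Lemma transport_rows (p : row_index) :
  map (row_value (transport p)) v = map (row_value p) u.
Proof.
apply: (@eq_from_nth _ None); first by rewrite !size_map suv.
rewrite size_map => j jv; have ju : (j < size u)%N by rewrite suv.
rewrite !(nth_map 0%N) //.
have same_pos i : (val ((val (transport p)).1 i) == nth 0%N v j)
                = (val ((val p).1 i) == nth 0%N u j).
  by rewrite /transport SubK /= ffunE pi_uv.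
rewrite /row_value (eq_pick same_pos); case: pickP => [i /eqP zi|_] //=.
congr (Some (_, _)); case: ifP => _ //; case: pickP => [i0 i0_out|_] //=; rewrite ffunE.
by case: eqP => // ii0; move: i0_out; rewrite -ii0 zi mem_nth.
Qed.

Lemma count_le (t : seq (option ('I_n * bool))) :
  (#|[pred p : row_index | map (row_value p) u == t]| <=
   #|[pred p : row_index | map (row_value p) v == t]|)%N.
Proof.
rewrite -(card_imset _ transport_inj); apply/subset_leq_card/subsetP => q.
by case/imsetP => p; rewrite !inE => pu ->; rewrite transport_rows.
Qed.

End Transport.

Lemma count_eq (u v : seq var) (t : seq (option ('I_n * bool))) :
  uniq u -> uniq v -> size u = size v -> {subset u <= D} -> {subset v <= D} ->
  derivable Sigma (u, v) ->
  #|[pred p : row_index | map (row_value p) u == t]| =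
  #|[pred p : row_index | map (row_value p) v == t]|.
Proof.
move=> uu uv suv uD vD der_uv; apply/eqP; rewrite eqn_leq.
have [pi pi_uv] := perm_sending uu uv suv uD vD.
have [pi' pi_vu] := perm_sending uv uu (esym suv) vD uD.
by rewrite (count_le suv der_uv pi_uv) (count_le (esym suv) (d_sym der_uv) pi_vu).
Qed.

End CounterTeam.

Section UniformTeam.
Local Open Scope ring_scope.
Variables (V : eqType) (D : seq var) (I : finType) (r : I -> var -> V).
Hypothesis I_gt0 : (0 < #|I|)%N.
Hypothesis r_inj : forall i j, (forall d, d \in D -> r i d = r j d) -> i = j.

Local Notation w := (#|I|%:R : Rdefinitions.R)^-1.

Lemma uniform_wt_gt0 : 0 < w.
Proof. by rewrite invr_gt0 ltr0n. Qed.

Lemma uniform_wt_range (i : I) : 0 <= w <= 1.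
Proof. by rewrite ltW ?uniform_wt_gt0 //= invf_le1 ?ltr0n // ler1n. Qed.

Lemma uniform_wt_sum : \sum_(i : I) w = 1.
Proof. by rewrite sumr_const -[_ *+ _]mulr_natr mulVf // pnatr_eq0 -lt0n. Qed.

Definition uniform_team : pteam V :=
  PTeam uniform_wt_range uniform_wt_sum r_inj.

Lemma marg_uniform (z : seq var) (t : seq V) :
  marg uniform_team z t = w *+ #|[pred i : I | map (r i) z == t]|.
Proof. by rewrite /marg /= (eq_bigl (mem [pred i : I | map (r i) z == t])) ?sumr_const. Qed.

End UniformTeam.

Lemma zero_row (Sigma : seq atom) (x D : seq var) :
  uniq x -> {subset x <= D} -> exists p : row_index Sigma x D (size x),
    map (row_value p) x = [seq Some (i, false) | i <- enum 'I_(size x)].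
Proof.
move=> ux xD.
have xiD (i : 'I_(size x)) : nth 0%N x i \in D by apply/xD/mem_nth.
pose z : {ffun 'I_(size x) -> seq_sub D} := [ffun i => SeqSub (xiD i)].
have vars_z : vars z = x.
  rewrite -[RHS](mkseq_nth 0%N) /mkseq -val_enum_ord -map_comp.
  by apply: eq_map => i; rewrite ffunE.
have valid0 : valid_row Sigma x (z, [ffun=> false]).
  apply/andP; split.
    apply/injectiveP => i j; rewrite !ffunE => -[] /eqP.
    by rewrite nth_uniq // => /eqP /val_inj.
  rewrite /parity big1 => [|i _]; last by rewrite ffunE.
  by apply/eqP/asboolP; rewrite vars_z; apply: d_refl.
exists (Sub _ valid0); rewrite -[X in map _ X = _]vars_z -map_comp.
by apply: eq_map => i /=; rewrite row_value_at SubK ffunE.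
Qed.

(* A row whose y-value is ((i, false))_i would be the row (y, 0), which is
   valid only if Σ ⊢ x ≈ y. *)
Lemma no_zero_row (Sigma : seq atom) (x y D : seq var) :
  size x = size y -> ~ derivable Sigma (x, y) ->
  forall p : row_index Sigma x D (size x),
    map (row_value p) y != [seq Some (i, false) | i <- enum 'I_(size x)].
Proof.
move=> sxy not_der p; apply/eqP => py.
have at_y (i : 'I_(size x)) : row_value p (nth 0%N y i) = Some (i, false).
  have iy : (i < size y)%N by rewrite -sxy.
  have := congr1 (fun s => nth None s i) py.
  by rewrite (nth_map 0%N) // (nth_map i) ?size_enum_ord // nth_ord_enum.
have vars_y : vars (val p).1 = y.
  rewrite -[RHS](mkseq_nth 0%N) -sxy /mkseq -val_enum_ord -map_comp.
  by apply: eq_map => i /=; have [] := row_value_Some (at_y i).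
have even : parity (val p).2 = false.
  by rewrite /parity big1 // => i _; have [] := row_value_Some (at_y i).
case/andP: (valP p) => _; rewrite even /= => /eqP/asboolP.
by rewrite vars_y.
Qed.

Section Completeness.
Local Open Scope ring_scope.
Variables (Sigma : seq atom) (x D : seq var).
Hypotheses (ux : uniq x) (xD : {subset x <= D}).

Lemma row_index_gt0 : (0 < #|row_index Sigma x D (size x)|)%N.
Proof. by have [p _] := zero_row Sigma ux xD; apply/card_gt0P; exists p. Qed.

Definition counter_team : pteam (option ('I_(size x) * bool)) :=
  uniform_team row_index_gt0 (@row_value_inj Sigma x D (size x)).

Lemma counter_team_sat (a : atom) :
  a \in Sigma -> wf_atom a -> {subset atom_vars a <= D} -> sat counter_team a.
Proof.
case: a => u v uvS /and3P [uu uv /eqP suv] uvD; split => // t.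
have uD : {subset u <= D} by move=> w wu; rewrite uvD // mem_cat wu.
have vD : {subset v <= D} by move=> w wv; rewrite uvD // mem_cat wv orbT.
by rewrite !marg_uniform (@count_eq Sigma x D (size x) u v t uu uv suv uD vD (d_ax uvS)).
Qed.

(* If Σ ⊬ x ≈ y, the value ((i, false))_i has positive probability for x and
   probability zero for y. *)
Lemma counter_team_refutes (y : seq var) :
  size x = size y -> ~ derivable Sigma (x, y) -> ~ sat counter_team (x, y).
Proof.
move=> sxy not_der [_]; set t0 := [seq Some (i, false) | i <- enum 'I_(size x)].
move/(_ t0); rewrite !marg_uniform /=.
have -> : #|[pred p : row_index Sigma x D (size x) | map (row_value p) y == t0]| = 0%N.
  by apply: eq_card0 => p; rewrite !inE; apply/negbTE/no_zero_row.
have x_pos : (0 < #|[pred p : row_index Sigma x D (size x) | map (row_value p) x == t0]|)%N.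
  by have [p0 p0x] := zero_row Sigma ux xD; apply/card_gt0P; exists p0; rewrite inE p0x.
by move=> same; have := uniform_wt_gt0 row_index_gt0; rewrite -(pmulrn_lgt0 _ x_pos) same mulr0n ltxx.
Qed.

End Completeness.

Theorem mainTheorem20 (Sigma : seq atom) (sigma : atom) :
  (forall a, a \in sigma :: Sigma -> wf_atom a) ->
  (models Sigma sigma <-> derivable Sigma sigma).
Proof.
move=> wf; split; last exact: soundness.
case: sigma wf => x y wf xy_models.
case: (asboolP (derivable Sigma (x, y))) => // not_der; exfalso.
pose D := undup (flatten [seq atom_vars a | a <- (x, y) :: Sigma]).
have varsD a : a \in (x, y) :: Sigma -> {subset atom_vars a <= D}.
  by move=> aS w wa; rewrite mem_undup; apply/flattenP; exists (atom_vars a); rewrite ?map_f.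
have /and3P [ux _ /eqP sxy] := wf _ (mem_head _ _).
have xD : {subset x <= D}.
  by move=> w wx; apply: (varsD _ (mem_head _ _)); rewrite mem_cat wx.
apply: (@counter_team_refutes Sigma x D ux xD y sxy not_der); apply: xy_models.
  by move=> w; rewrite mem_undup.
move=> a aS; apply: counter_team_sat => //; first by rewrite wf // inE aS orbT.
by apply: varsD; rewrite inE aS orbT.
Qed.
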